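(* Let $\beta:\mathbb{Z}\to\mathbb{R}$ have convergent increments and suppose $\beta(k)>0$ for all $k\in\mathbb{Z}$. Let $D_\beta$ be the operator on $\mathcal{H}$ given by $D_\beta f=\sum_{n}U^n(\beta(\mathbb{K}+n)+\beta(-\mathbb{K}))f_n(\mathbb{K})$ (i.e. $D_\beta f=\beta(\mathbb{K})f+f\beta(-\mathbb{K})$). Then $D_\beta$ is invertible, with $D_\beta^{-1}f=\sum_n U^n(\beta(\mathbb{K}+n)+\beta(-\mathbb{K}))^{-1}f_n(\mathbb{K})$, and for every $f\in\mathcal{H}^+$ (in the domain of $D_\beta^{-1}$) we have $$\langle \Theta f, D_\beta^{-1}f\rangle\ge 0.$$
   Context: Let $\{E_k\}_{k\in\mathbb{Z}}$ be the canonical basis of $\ell^2(\mathbb{Z})$, $UE_k=E_{k+1}$ the bilateral shift, $\mathbb{K}E_k=kE_k$, and for $a:\mathbb{Z}\to\mathbb{C}$, $a(\mathbb{K})E_k=a(k)E_k$. A function $\beta$ has convergent increments if $k\mapsto\beta(k)-\beta(k-1)$ has finite limits as $k\to+\infty$ and as $k\to-\infty$. $\mathcal{H}$ is the Hilbert space of Hilbert–Schmidt operators on $\ell^2(\mathbb{Z})$ with $\langle f,g\rangle=\mathrm{tr}(f^*g)$; each $f\in\mathcal{H}$ is uniquely written $f=\sum_{n\in\mathbb{Z}}U^nf_n(\mathbb{K})$ with $\sum_{n,k}|f_n(k)|^2<\infty$, and $\langle f,g\rangle=\sum_{n,k}\overline{f_n(k)}g_n(k)$. The reflection $\Theta:\mathcal{H}\to\mathcal{H}$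 is $\Theta f=\sum_nU^nf_n(-\mathbb{K}-n)$, i.e. $(\Theta f)_n(k)=f_n(-k-n)$. $\mathcal{H}^+=\{f\in\mathcal{H}: f_n(k)=0 \text{ whenever } n+2k<0\}$. Here $D_\beta$ is defined on those $f$ for which the series lies in $\mathcal{H}$. *)

From Stdlib Require Import Reals ZArith.
From Coquelicot Require Import Coquelicot.

Open Scope R_scope.

Definition convergent_increments (beta : Z -> R) : Prop :=
  (exists a : R, is_lim_seq (fun m : nat => beta (Z.of_nat m) - beta (Z.of_nat m - 1)%Z) a) /\
  (exists b : R, is_lim_seq (fun m : nat => beta (- Z.of_nat m)%Z - beta (- Z.of_nat m - 1)%Z) b).

(* An element f = sum_n U^n f_n(K) of H is represented by its coefficient
   array  f n k = f_n(k). *)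
Definition coeffs := Z -> Z -> C.

Definition boxsum (F : Z -> Z -> C) (N : nat) : C :=
  sum_n (fun i : nat =>
    sum_n (fun j : nat => F (Z.of_nat i - Z.of_nat N)%Z (Z.of_nat j - Z.of_nat N)%Z)
          (2 * N)%nat) (2 * N)%nat.

(* Hilbert–Schmidt: sum_{n,k} |f_n(k)|^2 < oo (nonnegative family with
   bounded partial sums). *)
Definition HS (f : coeffs) : Prop :=
  exists M : R, forall N : nat,
    Re (boxsum (fun n k => RtoC (Cmod (f n k) ^ 2)) N) <= M.

Definition Hplus (f : coeffs) : Prop :=
  HS f /\ forall n k : Z, (n + 2 * k < 0)%Z -> f n k = 0.

Definition Theta (f : coeffs) : coeffs := fun n k => f n (- k - n)%Z.

Definition Dbeta (beta : Z -> R) (f : coeffs) : coeffs :=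
  fun n k => (RtoC (beta (k + n)%Z + beta (- k)%Z) * f n k)%C.

Definition Dbeta_inv (beta : Z -> R) (f : coeffs) : coeffs :=
  fun n k => (RtoC (/ (beta (k + n)%Z + beta (- k)%Z)) * f n k)%C.

Definition dom_D (beta : Z -> R) (f : coeffs) : Prop := HS f /\ HS (Dbeta beta f).
Definition dom_Dinv (beta : Z -> R) (f : coeffs) : Prop := HS f /\ HS (Dbeta_inv beta f).

Definition inner_is (f g : coeffs) (v : C) : Prop :=
  filterlim (boxsum (fun n k => (Cconj (f n k) * g n k)%C)) eventually (locally v).

(* [D_beta] and its candidate inverse multiply the coefficient [f n k] by the
   positive symbol [beta (k + n) + beta (- k)] and by its reciprocal, so they
   invert each other coefficientwise.  For [f] in [H^+], the coefficients of
   [f] and of [Theta f] overlap only on the line [n + 2k = 0], which [Theta]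
   fixes; there the terms of [<Theta f, D_beta^-1 f>] are
   [|f n k|^2 / (beta (k + n) + beta (- k)) >= 0].  They are dominated by
   [|f n k|^2 + |(D_beta^-1 f) n k|^2], so the box partial sums increase to a
   finite nonnegative limit. *)

From Stdlib Require Import Reals ZArith Lia Lra FunctionalExtensionality.
From Coquelicot Require Import Coquelicot.

Open Scope R_scope.

Definition centered_sum {G : AbelianMonoid} (a : Z -> G) (N : nat) : G :=
  sum_n (fun j : nat => a (Z.of_nat j - Z.of_nat N)%Z) (2 * N).

Lemma boxsum_centered_sum (F : Z -> Z -> C) (N : nat) :
  boxsum F N = centered_sum (fun n => centered_sum (F n) N) N.
Proof. reflexivity. Qed.

Lemma sum_n_RtoC (a : nat -> R) (n : nat) :
  sum_n (fun i => RtoC (a i)) n = RtoC (sum_n a n).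
Proof.
  induction n as [|n IH].
  - now rewrite !sum_O.
  - rewrite !sum_Sn, IH. exact (eq_sym (RtoC_plus _ _)).
Qed.

Lemma centered_sum_RtoC (a : Z -> R) (N : nat) :
  centered_sum (fun z => RtoC (a z)) N = RtoC (centered_sum a N).
Proof. apply sum_n_RtoC. Qed.

Lemma centered_sum_le (a b : Z -> R) (N : nat) :
  (forall z, a z <= b z) -> centered_sum a N <= centered_sum b N.
Proof. intros Hab; apply sum_n_m_le; auto. Qed.

Lemma centered_sum_plus (a b : Z -> R) (N : nat) :
  centered_sum (fun z => a z + b z) N = centered_sum a N + centered_sum b N.
Proof. apply (sum_n_plus (fun j => a _) (fun j => b _)). Qed.

Lemma centered_sum_nonneg (a : Z -> R) (N : nat) :
  (forall z, 0 <= a z) -> 0 <= centered_sum a N.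
Proof.
  intros Ha. unfold centered_sum, sum_n.
  pose proof (sum_n_m_le (fun _ => zero) _ 0 (2 * N)
                (fun j => Ha (Z.of_nat j - Z.of_nat N)%Z)) as Hle.
  now rewrite sum_n_m_const_zero in Hle.
Qed.

Lemma centered_sum_le_succ (a : Z -> R) (N : nat) :
  (forall z, 0 <= a z) -> centered_sum a N <= centered_sum a (S N).
Proof.
  intros Ha. unfold centered_sum, sum_n.
  replace (2 * S N)%nat with (S (S (2 * N))) by lia.
  rewrite (sum_n_Sm _ 0 (S (2 * N))), (sum_Sn_m _ 0 (S (2 * N))), <- sum_n_m_S by lia.
  rewrite (sum_n_m_ext (fun i => a (Z.of_nat (S i) - Z.of_nat (S N))%Z)
                       (fun j => a (Z.of_nat j - Z.of_nat N)%Z)) by (intros; f_equal; lia).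
  change plus with Rplus.
  pose proof (Ha (Z.of_nat 0 - Z.of_nat (S N))%Z).
  pose proof (Ha (Z.of_nat (S (S (2 * N))) - Z.of_nat (S N))%Z).
  lra.
Qed.

Definition rboxsum (F : Z -> Z -> R) (N : nat) : R :=
  centered_sum (fun n => centered_sum (F n) N) N.

Lemma boxsum_RtoC (F : Z -> Z -> R) (N : nat) :
  boxsum (fun n k => RtoC (F n k)) N = RtoC (rboxsum F N).
Proof.
  unfold rboxsum. rewrite boxsum_centered_sum, <- centered_sum_RtoC.
  apply sum_n_ext; intros i. apply centered_sum_RtoC.
Qed.

Lemma rboxsum_le (F G : Z -> Z -> R) (N : nat) :
  (forall n k, F n k <= G n k) -> rboxsum F N <= rboxsum G N.
Proof. intros HFG. apply centered_sum_le; intros n. now apply centered_sum_le. Qed.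

Lemma rboxsum_plus (F G : Z -> Z -> R) (N : nat) :
  rboxsum (fun n k => F n k + G n k) N = rboxsum F N + rboxsum G N.
Proof.
  unfold rboxsum. rewrite <- centered_sum_plus.
  apply sum_n_ext; intros i. apply centered_sum_plus.
Qed.

Section NonnegBox.

Variable F : Z -> Z -> R.
Hypothesis F_nonneg : forall n k, 0 <= F n k.

Lemma rboxsum_nonneg (N : nat) : 0 <= rboxsum F N.
Proof. apply centered_sum_nonneg; intros n. now apply centered_sum_nonneg. Qed.

Lemma rboxsum_le_succ (N : nat) : rboxsum F N <= rboxsum F (S N).
Proof.
  apply Rle_trans with (centered_sum (fun n => centered_sum (F n) N) (S N)).
  - apply centered_sum_le_succ; intros n. now apply centered_sum_nonneg.
  - apply centered_sum_le; intros n. now apply centered_sum_le_succ.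
Qed.

Lemma boxsum_cvg_of_bounded (M : R) :
  (forall N, rboxsum F N <= M) ->
  exists l, 0 <= l /\
    filterlim (boxsum (fun n k => RtoC (F n k))) eventually (locally (RtoC l)).
Proof.
  intros HM.
  destruct (ex_finite_lim_seq_incr (rboxsum F) M rboxsum_le_succ HM) as [l Hl].
  exists l; split.
  - apply (is_lim_seq_le (fun _ => 0) (rboxsum F) 0 l rboxsum_nonneg); auto.
    apply is_lim_seq_const.
  - apply (filterlim_ext (fun N => RtoC (rboxsum F N))).
    { intros N. now rewrite boxsum_RtoC. }
    apply filterlim_locally; intros eps.
    apply is_lim_seq_spec in Hl. destruct (Hl eps) as [N0 HN0].
    exists N0; intros N HN. split; simpl; [apply HN0, HN | apply ball_center].
Qed.

End NonnegBox.

Lemma HS_rboxsum_bounded (f : coeffs) :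
  HS f -> exists M, forall N, rboxsum (fun n k => Cmod (f n k) ^ 2) N <= M.
Proof.
  intros [M HM]; exists M; intros N.
  specialize (HM N). now rewrite boxsum_RtoC in HM.
Qed.

Section Dbeta.

Variable beta : Z -> R.
Hypothesis beta_pos : forall k, 0 < beta k.

Lemma Dbeta_symbol_pos (n k : Z) : 0 < beta (k + n)%Z + beta (- k)%Z.
Proof. pose proof (beta_pos (k + n)); pose proof (beta_pos (- k)); lra. Qed.

Lemma DbetaK (f : coeffs) : Dbeta_inv beta (Dbeta beta f) = f.
Proof.
  extensionality n; extensionality k. unfold Dbeta_inv, Dbeta.
  rewrite Cmult_assoc, <- RtoC_mult, Rinv_l, Cmult_1_l; auto.
  apply Rgt_not_eq, Dbeta_symbol_pos.
Qed.

Lemma Dbeta_invK (g : coeffs) : Dbeta beta (Dbeta_inv beta g) = g.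
Proof.
  extensionality n; extensionality k. unfold Dbeta_inv, Dbeta.
  rewrite Cmult_assoc, <- RtoC_mult, Rinv_r, Cmult_1_l; auto.
  apply Rgt_not_eq, Dbeta_symbol_pos.
Qed.

Definition Theta_pairing_weight (f : coeffs) (n k : Z) : R :=
  if Z.eq_dec (n + 2 * k) 0
  then / (beta (k + n)%Z + beta (- k)%Z) * Cmod (f n k) ^ 2
  else 0.

Lemma Theta_Dbeta_inv_coeff (f : coeffs) (n k : Z) :
  (forall n k, (n + 2 * k < 0)%Z -> f n k = 0) ->
  (Cconj (Theta f n k) * Dbeta_inv beta f n k)%C = RtoC (Theta_pairing_weight f n k).
Proof.
  intros Hsupp. unfold Theta_pairing_weight, Theta, Dbeta_inv.
  destruct (Z.eq_dec (n + 2 * k) 0).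
  - replace (- k - n)%Z with k by lia.
    rewrite RtoC_mult, Cmod2_conj. ring.
  - destruct (Z_lt_le_dec (n + 2 * k) 0).
    + rewrite (Hsupp n k) by assumption. now rewrite !Cmult_0_r.
    + rewrite (Hsupp n (- k - n)%Z) by lia.
      apply injective_projections; simpl; ring.
Qed.

Lemma Theta_pairing_weight_nonneg (f : coeffs) (n k : Z) :
  0 <= Theta_pairing_weight f n k.
Proof.
  unfold Theta_pairing_weight. destruct Z.eq_dec; [|lra].
  apply Rmult_le_pos; [|apply pow2_ge_0].
  apply Rlt_le, Rinv_0_lt_compat, Dbeta_symbol_pos.
Qed.

(* [r |f|^2 = |f| |r f| <= |f|^2 + |r f|^2] for the weight [r > 0]. *)
Lemma Theta_pairing_weight_le (f : coeffs) (n k : Z) :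
  Theta_pairing_weight f n k <= Cmod (f n k) ^ 2 + Cmod (Dbeta_inv beta f n k) ^ 2.
Proof.
  unfold Theta_pairing_weight, Dbeta_inv. rewrite Cmod_mult, Cmod_R.
  set (r := / (beta (k + n)%Z + beta (- k)%Z)).
  assert (Hr : 0 < r) by apply Rinv_0_lt_compat, Dbeta_symbol_pos.
  rewrite Rabs_pos_eq by lra.
  pose proof (Cmod_ge_0 (f n k)).
  destruct Z.eq_dec; nra.
Qed.

Lemma inner_Theta_Dbeta_inv_nonneg (f : coeffs) :
  Hplus f -> dom_Dinv beta f ->
  exists L, 0 <= L /\ inner_is (Theta f) (Dbeta_inv beta f) (RtoC L).
Proof.
  intros [HSf Hsupp] [_ HSg].
  destruct (HS_rboxsum_bounded f HSf) as [M1 HM1].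
  destruct (HS_rboxsum_bounded _ HSg) as [M2 HM2].
  destruct (boxsum_cvg_of_bounded (Theta_pairing_weight f)
             (Theta_pairing_weight_nonneg f) (M1 + M2))
    as [L [HL HcvL]].
  { intros N. eapply Rle_trans; [apply rboxsum_le, Theta_pairing_weight_le|].
    rewrite rboxsum_plus. specialize (HM1 N); specialize (HM2 N); lra. }
  exists L; split; [exact HL|].
  unfold inner_is.
  replace (fun n k => (Cconj (Theta f n k) * Dbeta_inv beta f n k)%C)
    with (fun n k => RtoC (Theta_pairing_weight f n k)); [exact HcvL|].
  extensionality n; extensionality k. symmetry. now apply Theta_Dbeta_inv_coeff.
Qed.

End Dbeta.

Theorem mainTheorem2 (beta : Z -> R)
  (hinc : convergent_increments beta)
  (hpos : forall k : Z, 0 < beta k) :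
  (* D_beta is invertible with the displayed inverse *)
  (forall f : coeffs, dom_D beta f -> Dbeta_inv beta (Dbeta beta f) = f) /\
  (forall g : coeffs, dom_Dinv beta g ->
     dom_D beta (Dbeta_inv beta g) /\ Dbeta beta (Dbeta_inv beta g) = g) /\
  (* positivity *)
  (forall f : coeffs, Hplus f -> dom_Dinv beta f ->
     exists L : R, 0 <= L /\ inner_is (Theta f) (Dbeta_inv beta f) (RtoC L)).
Proof.
  clear hinc.
  split; [|split].
  - intros f _. now apply DbetaK.
  - intros g [HSg HSDg]. unfold dom_D.
    rewrite (Dbeta_invK beta hpos g). auto.
  - apply inner_Theta_Dbeta_inv_nonneg, hpos.
Qed.
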